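(* Let $\alpha\in(0,1)$ be irrational, let $\mathcal{L}_\alpha$ be the Sturmian language generated by $\alpha$, and let $q_n=[(n+1)\alpha]$ for $n\ge0$. Let ${\rm S}:\mathcal{L}_\alpha\to\mathbb{N}$ be a homomorphism, and write ${\rm S}_0={\rm S}(0)$, ${\rm S}_1={\rm S}(1)$. Then $${\rm S}(\mathcal{L}_\alpha)=\{({\rm S}_1-{\rm S}_0)q_n+n{\rm S}_0+{\rm S}_0:\ n\ge0\}\ \cup\ \{({\rm S}_1-{\rm S}_0)q_n+n{\rm S}_0+{\rm S}_1:\ n\ge0\}.$$
   Context: $\mathbb{N}=\{1,2,3,\dots\}$ and $[x]$ denotes the integer part (floor) of $x$. For irrational $\alpha\in(0,1)$, the characteristic word $c_\alpha=(c_\alpha(n))_{n\ge0}$ is the infinite word over $\{0,1\}$ with $c_\alpha(n)=[(n+2)\alpha]-[(n+1)\alpha]$. The Sturmian language $\mathcal{L}_\alpha$ is the set of all nonempty finite words occurring as factors (subwords) of $c_\alpha$ (equivalently, of $0c_\alpha$ or of $1c_\alpha$). A homomorphism ${\rm S}:\mathcal{L}_\alpha\to\mathbb{N}$ is a map with ${\rm S}(w_1\cdots w_n)={\rm S}(w_1)+\cdots+{\rm S}(w_n)$, determined by ${\rm S}(0),{\rm S}(1)\in\mathbb{N}$. *)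

From Stdlib Require Import Reals ZArith List.
Import ListNotations.
Open Scope R_scope.

Definition floorR (x : R) : Z := Int_part x.

Definition irrational (x : R) : Prop :=
  forall (p q : Z), q <> 0%Z -> x <> IZR p / IZR q.

Definition charword (alpha : R) (n : nat) : Z :=
  (floorR (INR (n + 2) * alpha) - floorR (INR (n + 1) * alpha))%Z.

Definition sturmian_factor (alpha : R) (w : list Z) : Prop :=
  w <> [] /\
  exists i : nat, w = map (fun k => charword alpha (i + k)) (seq 0 (length w)).

Definition hom (S0 S1 : nat) (w : list Z) : nat :=
  fold_right (fun a acc => ((if Z.eqb a 0 then S0 else S1) + acc)%nat) 0%nat w.

Definition qseq (alpha : R) (n : nat) : Z := floorR (INR (n + 1) * alpha).

(** The value of [S] on a factor of length [L] is [L S0] plus [S1 - S0]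
    times its number of ones, and the ones of the factor starting at position [i]
    telescope to [q (i+L) - q i = [(i+L+1)α] - [(i+1)α]], which is
    [[Lα]] or [[Lα] + 1].  Both values occur: if the increment over
    windows of length [L] were a constant [c], then [q (jL) = q 0 + j c]
    for all [j], so [j (Lα - c)] would stay in [(-1, 1)], forcing
    [Lα = c] against the irrationality of [α].  For [L = n + 1] we have
    [[Lα] = q n], which gives the two families of the theorem. *)

From Stdlib Require Import Reals ZArith List.
From Stdlib Require Import Lra Lia Classical.
Open Scope R_scope.

Lemma floorR_unique (x : R) (z : Z) : IZR z <= x < IZR z + 1 -> floorR x = z.
Proof.
  intros [Hlo Hhi]. unfold floorR. destruct (base_Int_part x) as [B1 B2].
  assert (A1 : IZR (Int_part x) < IZR (z + 1)) by (rewrite plus_IZR; lra).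
  assert (A2 : IZR z < IZR (Int_part x + 1)) by (rewrite plus_IZR; lra).
  apply lt_IZR in A1. apply lt_IZR in A2. lia.
Qed.

Lemma floorR_spec (x : R) : IZR (floorR x) <= x < IZR (floorR x) + 1.
Proof. unfold floorR. destruct (base_Int_part x). lra. Qed.

Lemma floorR_add (x y : R) :
  floorR (x + y) = (floorR x + floorR y)%Z \/
  floorR (x + y) = (floorR x + floorR y + 1)%Z.
Proof.
  pose proof (floorR_spec x). pose proof (floorR_spec y).
  destruct (Rlt_dec (x + y) (IZR (floorR x + floorR y) + 1)).
  - left. apply floorR_unique. rewrite plus_IZR in *. lra.
  - right. apply floorR_unique. rewrite !plus_IZR in *. lra.
Qed.

Lemma bounded_multiples_eq0 (x : R) : (forall j : nat, Rabs (INR j * x) < 1) -> x = 0.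
Proof.
  intros Hbound. apply NNPP. intros Hx.
  destruct (INR_archimed (Rabs x) 1) as [j Hj]; [apply Rabs_pos_lt; exact Hx|].
  specialize (Hbound j).
  rewrite Rabs_mult, (Rabs_pos_eq (INR j)) in Hbound by apply pos_INR. lra.
Qed.

Definition factor (alpha : R) (i L : nat) : list Z :=
  map (fun k => charword alpha (i + k)) (seq 0 L).

Lemma factor_sturmian (alpha : R) (i n : nat) : sturmian_factor alpha (factor alpha i (S n)).
Proof.
  split; [discriminate|].
  exists i. unfold factor. rewrite length_map, length_seq. reflexivity.
Qed.

Lemma charword_qseq (alpha : R) (n : nat) :
  charword alpha n = (qseq alpha (S n) - qseq alpha n)%Z.
Proof. unfold charword, qseq. now replace (n + 2)%nat with (S n + 1)%nat by lia. Qed.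

Lemma qseq_floorR (alpha : R) (n : nat) : qseq alpha n = floorR (INR (S n) * alpha).
Proof. unfold qseq. now rewrite Nat.add_1_r. Qed.

Lemma qseq_window (alpha : R) (i L : nat) :
  (qseq alpha (i + L) - qseq alpha i = floorR (INR L * alpha))%Z \/
  (qseq alpha (i + L) - qseq alpha i = floorR (INR L * alpha) + 1)%Z.
Proof.
  unfold qseq.
  replace (INR (i + L + 1) * alpha) with (INR (i + 1) * alpha + INR L * alpha)
    by (rewrite !plus_INR; ring).
  destruct (floorR_add (INR (i + 1) * alpha) (INR L * alpha)); lia.
Qed.

Lemma qseq_window_succ (alpha : R) (i n : nat) :
  (qseq alpha (i + S n) - qseq alpha i = qseq alpha n)%Z \/
  (qseq alpha (i + S n) - qseq alpha i = qseq alpha n + 1)%Z.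
Proof. rewrite (qseq_floorR alpha n). apply qseq_window. Qed.

Lemma charword_binary (alpha : R) (n : nat) :
  0 <= alpha < 1 -> charword alpha n = 0%Z \/ charword alpha n = 1%Z.
Proof.
  intros Halpha.
  assert (Hq0 : qseq alpha 0 = 0%Z) by (apply floorR_unique; simpl; lra).
  rewrite charword_qseq, <- Nat.add_1_r.
  destruct (qseq_window_succ alpha n 0); lia.
Qed.

Lemma hom_binary (S0 S1 : nat) (w : list Z) :
  Forall (fun a => a = 0%Z \/ a = 1%Z) w ->
  Z.of_nat (hom S0 S1 w) =
  ((Z.of_nat S1 - Z.of_nat S0) * fold_right Z.add 0%Z w
   + Z.of_nat (length w) * Z.of_nat S0)%Z.
Proof.
  induction 1 as [|a w Ha _ IH]; [cbn; ring|].
  cbn [hom fold_right length]. rewrite Nat2Z.inj_add, Nat2Z.inj_succ.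
  fold (hom S0 S1 w). rewrite IH.
  destruct Ha as [-> | ->]; cbn [Z.eqb]; ring.
Qed.

Lemma sum_charword_window (alpha : R) (i s L : nat) :
  fold_right Z.add 0%Z (map (fun k => charword alpha (i + k)) (seq s L)) =
  (qseq alpha (i + s + L) - qseq alpha (i + s))%Z.
Proof.
  revert s. induction L as [|L IH]; intros s; cbn [seq map fold_right].
  - rewrite Nat.add_0_r. ring.
  - rewrite IH, charword_qseq.
    replace (i + S s + L)%nat with (i + s + S L)%nat by lia.
    replace (i + S s)%nat with (S (i + s)) by lia. ring.
Qed.

Lemma hom_factor (alpha : R) (S0 S1 : nat) (i L : nat) :
  0 <= alpha < 1 ->
  Z.of_nat (hom S0 S1 (factor alpha i L)) =
  ((Z.of_nat S1 - Z.of_nat S0) * (qseq alpha (i + L) - qseq alpha i)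
   + Z.of_nat L * Z.of_nat S0)%Z.
Proof.
  intros Halpha. rewrite hom_binary.
  - unfold factor. rewrite sum_charword_window, length_map, length_seq, !Nat.add_0_r.
    reflexivity.
  - apply Forall_map, Forall_forall. intros k _. now apply charword_binary.
Qed.

Lemma qseq_window_nonconstant (alpha : R) (L : nat) (c : Z) :
  irrational alpha -> (1 <= L)%nat ->
  ~ (forall i, (qseq alpha (i + L) - qseq alpha i)%Z = c).
Proof.
  intros Hirr HL Hconst.
  assert (Hlin : forall j, qseq alpha (j * L) = (qseq alpha 0 + Z.of_nat j * c)%Z).
  { induction j as [|j IH]; [simpl; ring|].
    replace (S j * L)%nat with (j * L + L)%nat by lia.
    specialize (Hconst (j * L)%nat). lia. }
  assert (Hcoeff : INR L * alpha - IZR c = 0).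
  { apply bounded_multiples_eq0. intros j.
    pose proof (floorR_spec (INR (0 + 1) * alpha)) as B0.
    pose proof (floorR_spec (INR (j * L + 1) * alpha)) as Bj.
    fold (qseq alpha 0) in B0. fold (qseq alpha (j * L)) in Bj.
    rewrite Hlin, plus_IZR, mult_IZR, <- INR_IZR_INZ in Bj.
    rewrite plus_INR, mult_INR in Bj. simpl in B0, Bj.
    apply Rabs_def1; nra. }
  apply (Hirr c (Z.of_nat L)); [lia|].
  rewrite <- INR_IZR_INZ. assert (0 < INR L) by (apply lt_0_INR; lia).
  field_simplify_eq; lra.
Qed.

Lemma qseq_window_succ_attains (alpha : R) (n : nat) (t : Z) :
  irrational alpha -> (t = 0 \/ t = 1)%Z ->
  exists i, (qseq alpha (i + S n) - qseq alpha i = qseq alpha n + t)%Z.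
Proof.
  intros Hirr Ht. apply NNPP. intros Hnone.
  apply (qseq_window_nonconstant alpha (S n) (qseq alpha n + 1 - t) Hirr); [lia|].
  intros i. destruct (qseq_window_succ alpha i n);
    destruct Ht; subst t; try lia; exfalso; apply Hnone; exists i; lia.
Qed.

Theorem theorem3 (alpha : R) (S0 S1 : nat)
  (Halpha : 0 < alpha < 1) (Hirr : irrational alpha)
  (HS0 : (1 <= S0)%nat) (HS1 : (1 <= S1)%nat) :
  forall m : Z,
    (exists w : list Z, sturmian_factor alpha w /\ Z.of_nat (hom S0 S1 w) = m) <->
    (exists n : nat,
        m = ((Z.of_nat S1 - Z.of_nat S0) * qseq alpha n + Z.of_nat n * Z.of_nat S0
             + Z.of_nat S0)%Z
     \/ m = ((Z.of_nat S1 - Z.of_nat S0) * qseq alpha n + Z.of_nat n * Z.of_nat S0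
             + Z.of_nat S1)%Z).
Proof.
  assert (Halpha' : 0 <= alpha < 1) by lra.
  intros m. split.
  - intros [w [[Hne [i Hw]] <-]].
    destruct (length w) as [|n] eqn:Hlen; [now destruct w|].
    change (w = factor alpha i (S n)) in Hw.
    exists n. rewrite Hw, hom_factor, Nat2Z.inj_succ by exact Halpha'.
    destruct (qseq_window_succ alpha i n) as [Hq | Hq]; rewrite Hq; [left | right]; ring.
  - intros [n Hm].
    assert (Ht : exists t, (t = 0 \/ t = 1)%Z /\
      m = ((Z.of_nat S1 - Z.of_nat S0) * (qseq alpha n + t)
           + Z.of_nat (S n) * Z.of_nat S0)%Z).
    { rewrite Nat2Z.inj_succ.
      destruct Hm as [-> | ->]; [exists 0%Z | exists 1%Z]; split; auto; ring. }
    destruct Ht as [t [Ht ->]].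
    destruct (qseq_window_succ_attains alpha n t Hirr Ht) as [i Hi].
    exists (factor alpha i (S n)). split; [apply factor_sturmian|].
    now rewrite hom_factor, Hi by exact Halpha'.
Qed.
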